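(* A $5 \times 5$ real matrix is panstochastic if and only if it is a convex combination of panstochastic permutation matrices.
   Context: An $n \times n$ matrix with nonnegative real entries is doubly stochastic if the sum of the entries along any of its rows or columns is equal to $1$. A doubly stochastic matrix is panstochastic if the sum of the entries along any downward diagonal or upward diagonal, either broken or unbroken, is equal to $1$ (indexing rows and columns by $\{0,1,\dots,n-1\}$, the $k$th upward diagonal consists of the entries $(i,j)$ with $i+j \equiv k \pmod n$, and the $k$th downward diagonal of the entries $(i,j)$ with $i-j \equiv k \pmod n$). A linear combination is called convex if the coefficients are nonnegative and their sum is equal to $1$. *)

From mathcomp Require Import all_boot all_order all_algebra perm.
From mathcomp Require Import reals.
Set Implicit Arguments. Unset Strict Implicit. Unset Printing Implicit Defensive.
Import Order.TTheory GRing.Theory Num.Theory.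
Local Open Scope ring_scope.

Definition doubly_stochastic {R : realType} (n : nat) (A : 'M[R]_n) : Prop :=
  (forall i j, 0 <= A i j) /\
  (forall i : 'I_n, \sum_(j < n) A i j = 1) /\
  (forall j : 'I_n, \sum_(i < n) A i j = 1).

(* k-th upward diagonal: entries (i,j) with i + j = k (mod n);
   k-th downward diagonal: entries (i,j) with i - j = k (mod n),
   written without subtraction as i = j + k (mod n). *)
Definition panstochastic {R : realType} (n : nat) (A : 'M[R]_n) : Prop :=
  doubly_stochastic A /\
  (forall k : 'I_n,
     \sum_(i < n) \sum_(j < n | ((i + j) %% n == nat_of_ord k)%N) A i j = 1) /\
  (forall k : 'I_n,
     \sum_(i < n) \sum_(j < n | (nat_of_ord i == (j + k) %% n)%N) A i j = 1).

Definition convex_comb_pan_perm {R : realType} (n : nat) (A : 'M[R]_n) : Prop :=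
  exists c : 'S_n -> R,
    (forall s, 0 <= c s) /\
    (forall s, c s != 0 -> panstochastic (perm_mx s : 'M[R]_n)) /\
    \sum_(s : 'S_n) c s = 1 /\
    A = \sum_(s : 'S_n) c s *: (perm_mx s : 'M[R]_n).

(* Index rows and columns by Z/5 and write L_s(u) for the sum of A along the line
   j = s i + u.  Over a prime field the p + 1 lines through a point (i, j) cover it
   p + 1 times and every other point exactly once, so their sums add up to
   p A_ij + (total mass).  For a panstochastic 5 x 5 matrix the rows, the columns
   (slope 0) and the two diagonal directions (slopes 1 and -1) all have sum 1, which
   leaves 5 A_ij = L_2(j - 2i) + L_3(j - 3i) - 1.  The permutations i |-> s i + u with
   s = 2, 3 are panstochastic since s and 1 +- s are units mod 5, and with
   m = min_u L_2(u) this gives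
     A = sum_u (L_2(u) - m)/5 P_{2,u} + sum_v (L_3(v) - 1 + m)/5 P_{3,v},
   a convex combination: the slope-2 line through the minimiser meets every slope-3
   line in a point where A >= 0.  The converse holds because all the defining
   conditions are affine in A. *)

From mathcomp Require Import all_boot all_order all_algebra perm.
From mathcomp Require Import reals ring lra.
Set Implicit Arguments. Unset Strict Implicit. Unset Printing Implicit Defensive.
Import Order.TTheory GRing.Theory Num.Theory.
Local Open Scope ring_scope.

Section ConvexCombinations.
Variables (R : realType) (n : nat).

Lemma perm_mxE (s : 'S_n) i j : (perm_mx s : 'M[R]_n) i j = (s i == j)%:R.
Proof. by rewrite !mxE. Qed.

Lemma sum_indicator_inj (T : finType) (g : T -> T) (k : T) :
  injective g -> \sum_i (g i == k)%:R = 1 :> R.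
Proof.
move=> g_inj; transitivity (\sum_i (i == k)%:R : R).
  by rewrite [RHS](reindex_inj g_inj).
by rewrite (bigD1 k) //= eqxx big1 ?addr0 // => i /negbTE ->.
Qed.

Lemma doubly_stochastic_total (A : 'M[R]_n) :
  doubly_stochastic A -> \sum_i \sum_j A i j = n%:R.
Proof.
move=> [_ [rows _]]; under eq_bigr do rewrite rows.
by rewrite sumr_const card_ord.
Qed.

Lemma sum_mulr_delta (T : finType) (F : T -> R) k :
  \sum_t F t * (t == k)%:R = F k.
Proof.
rewrite (bigD1 k) //= eqxx mulr1 big1 ?addr0 // => t /negbTE ->.
by rewrite mulr0.
Qed.

Lemma convex_sum_eq1 (I : finType) (c L : I -> R) :
  \sum_i c i = 1 -> (forall i, c i != 0 -> L i = 1) -> \sum_i c i * L i = 1.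
Proof.
move=> c_sum L1; rewrite -[RHS]c_sum; apply: eq_bigr => i _.
by have [->|/L1 ->] := eqVneq (c i) 0; rewrite ?mul0r ?mulr1.
Qed.

Lemma panstochastic_convex (I : finType) (c : I -> R) (M : I -> 'M[R]_n) :
  (forall i, 0 <= c i) -> \sum_i c i = 1 ->
  (forall i, c i != 0 -> panstochastic (M i)) ->
  panstochastic (\sum_i c i *: M i).
Proof.
move=> c_ge0 c_sum M_pan.
have combE x y : (\sum_i c i *: M i) x y = \sum_i c i * M i x y.
  by rewrite summxE; apply: eq_bigr => i _; rewrite mxE.
split; [split; [|split]|split].
- move=> x y; rewrite combE; apply: sumr_ge0 => i _.
  have [->|/M_pan [[M_ge0 _] _]] := eqVneq (c i) 0; first by rewrite mul0r.
  exact: mulr_ge0.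
- move=> x; under eq_bigr do rewrite combE.
  rewrite exchange_big /=; under eq_bigr do rewrite -mulr_sumr.
  by apply: convex_sum_eq1 => // i /M_pan [[_ [rows _]] _].
- move=> y; under eq_bigr do rewrite combE.
  rewrite exchange_big /=; under eq_bigr do rewrite -mulr_sumr.
  by apply: convex_sum_eq1 => // i /M_pan [[_ [_ cols]] _].
- move=> k; under eq_bigr do (under eq_bigr do rewrite combE; rewrite exchange_big /=).
  rewrite exchange_big /=.
  under eq_bigr do (under eq_bigr do rewrite -mulr_sumr; rewrite -mulr_sumr).
  by apply: convex_sum_eq1 => // i /M_pan [_ [up _]].
- move=> k; under eq_bigr do (under eq_bigr do rewrite combE; rewrite exchange_big /=).
  rewrite exchange_big /=.
  under eq_bigr do (under eq_bigr do rewrite -mulr_sumr; rewrite -mulr_sumr).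
  by apply: convex_sum_eq1 => // i /M_pan [_ [_ down]].
Qed.

Lemma convex_comb_pan_perm_family (I : finType) (w : I -> R) (sigma : I -> 'S_n) :
  (forall i, 0 <= w i) -> \sum_i w i = 1 ->
  (forall i, panstochastic (perm_mx (sigma i) : 'M[R]_n)) ->
  convex_comb_pan_perm (\sum_i w i *: perm_mx (sigma i) : 'M[R]_n).
Proof.
move=> w_ge0 w_sum sigma_pan.
exists (fun s => \sum_(i | sigma i == s) w i); split; [|split; [|split]].
- by move=> s; apply: sumr_ge0.
- move=> s; have [i /eqP <- _|no_i] := pickP (fun i => sigma i == s).
    exact: sigma_pan.
  by rewrite big_pred0 ?eqxx.
- by rewrite -w_sum [RHS](partition_big sigma xpredT).
- rewrite (partition_big sigma xpredT) //=; apply: eq_bigr => s _.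
  by rewrite scaler_suml; apply: eq_bigr => i /eqP ->.
Qed.

End ConvexCombinations.

Section CyclicIndices.
Variables (R : realType) (m : nat).
Local Notation n := m.+2.
Implicit Types (A : 'M[R]_n) (a i j k s u : 'I_n).

Lemma up_diag_rowE A i k :
  \sum_(j < n | ((i + j) %% n == k)%N) A i j = A i (k - i).
Proof.
rewrite (big_pred1 (k - i)) // => j /=.
rewrite [RHS]eq_sym subr_eq [j + i]addrC eq_sym; exact: (inj_eq val_inj k (i + j)).
Qed.

Lemma down_diag_rowE A i k :
  \sum_(j < n | (nat_of_ord i == (j + k) %% n)%N) A i j = A i (i - k).
Proof.
rewrite (big_pred1 (i - k)) // => j /=.
rewrite [RHS]eq_sym subr_eq; exact: (inj_eq val_inj i (j + k)).
Qed.

Lemma panstochastic_perm_mx (s : 'S_n) :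
  injective (fun i => i + s i) -> injective (fun i => i - s i) ->
  panstochastic (perm_mx s : 'M[R]_n).
Proof.
move=> up_inj down_inj; split; [split; [|split]|split].
- by move=> i j; rewrite perm_mxE ler0n.
- move=> i; under eq_bigr do rewrite perm_mxE eq_sym.
  exact: (sum_indicator_inj R (s i) (@inj_id _)).
- move=> j; under eq_bigr do rewrite perm_mxE.
  exact: sum_indicator_inj (@perm_inj _ s).
- move=> k; under eq_bigr do rewrite up_diag_rowE perm_mxE.
  under eq_bigr do rewrite eq_sym subr_eq addrC eq_sym.
  exact: sum_indicator_inj.
- move=> k; under eq_bigr do rewrite down_diag_rowE perm_mxE.
  under eq_bigr do rewrite eq_sym subr_eq addrC -subr_eq.
  exact: sum_indicator_inj.
Qed.

Lemma affine_inj a u : a \is a GRing.unit -> injective (fun i => a * i + u).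
Proof. by move=> a_unit i i' /addIr /(mulrI a_unit). Qed.

Definition affine_perm a u (a_unit : a \is a GRing.unit) : 'S_n :=
  perm (affine_inj (u := u) a_unit).

Lemma perm_mx_affineE a u (a_unit : a \is a GRing.unit) i j :
  (perm_mx (affine_perm u a_unit) : 'M[R]_n) i j = (u == j - a * i)%:R.
Proof.
rewrite perm_mxE permE -subr_eq0 -[u == _]subr_eq0.
by have -> : a * i + u - j = u - (j - a * i) by ring.
Qed.

Lemma panstochastic_affine_perm a u (a_unit : a \is a GRing.unit) :
  1 + a \is a GRing.unit -> 1 - a \is a GRing.unit ->
  panstochastic (perm_mx (affine_perm u a_unit) : 'M[R]_n).
Proof.
move=> up_unit down_unit; apply: panstochastic_perm_mx => i i'; rewrite !permE.
- move=> up_eq; apply: (affine_inj (u := u) up_unit).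
  by rewrite /= !mulrDl !mul1r -!addrA.
- move=> down_eq; apply: (affine_inj (u := - u) down_unit).
  by rewrite /= !mulrBl !mul1r -!addrA -!opprD.
Qed.

Definition line_sum A s u := \sum_i A i (s * i + u).

Lemma sum_line_sum A s : \sum_u line_sum A s u = \sum_i \sum_j A i j.
Proof.
rewrite exchange_big /=; apply: eq_bigr => i _.
by rewrite [RHS](reindex_inj (addrI (s * i))).
Qed.

Lemma panstochastic_line_sum A u : panstochastic A ->
  [/\ line_sum A 0 u = 1, line_sum A 1 u = 1 & line_sum A (-1) u = 1].
Proof.
move=> [[_ [_ cols]] [up down]]; split; rewrite /line_sum.
- by under eq_bigr do rewrite mul0r add0r.
- by rewrite -(down (- u)); apply: eq_bigr => i _; rewrite down_diag_rowE mul1r opprK.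
- by rewrite -(up u); apply: eq_bigr => i _; rewrite up_diag_rowE mulN1r addrC.
Qed.

Lemma unitZp_prime (x : 'I_n) : prime n -> (x \is a GRing.unit) = (x != 0).
Proof.
move=> n_prime; have := @unitZpE n x isT; rewrite natr_Zp => ->.
rewrite prime_coprime //.
have [->|x_neq0] := eqVneq x 0; first by rewrite dvdn0.
by rewrite gtnNdvd // lt0n.
Qed.

Lemma line_sums_through A i j : prime n ->
  \sum_s line_sum A s (j - s * i) + \sum_j' A i j' =
  n%:R * A i j + \sum_i' \sum_j' A i' j'.
Proof.
move=> n_prime.
have own_row : \sum_s A i (s * i + (j - s * i)) = n%:R * A i j.
  under eq_bigr do rewrite addrCA subrr addr0.
  by rewrite sumr_const card_ord mulr_natl.
have other_row i' : i' != i -> \sum_s A i' (s * i' + (j - s * i)) = \sum_j' A i' j'.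
  rewrite -subr_eq0 -unitZp_prime // => diff_unit.
  rewrite [RHS](reindex_inj (affine_inj (u := j) diff_unit)); apply: eq_bigr => s _.
  by congr (A i' _); ring.
rewrite /line_sum exchange_big (bigD1 i) //= own_row (eq_bigr _ other_row).
by rewrite [in RHS](bigD1 i) //= -addrA (addrC (\sum_(j' < n) A i j')).
Qed.

End CyclicIndices.

Section Order5.
Variable R : realType.
Implicit Types (A : 'M[R]_5) (i j u v : 'I_5).

Lemma sum_ord5 (F : 'I_5 -> R) :
  \sum_s F s = F 0 + F 1 + F 2 + F 3 + F (-1).
Proof.
rewrite !big_ord_recl big_ord0 addr0 !addrA.
by do 4?[congr (_ + _)]; congr F; apply: val_inj.
Qed.

Lemma panstochastic5_entry A i j : panstochastic A ->
  5 * A i j = line_sum A 2 (j - 2 * i) + line_sum A 3 (j - 3 * i) - 1.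
Proof.
move=> A_pan; have := line_sums_through A i j (isT : prime 5).
have [[_ [rows _]] _] := A_pan.
rewrite rows (doubly_stochastic_total A_pan.1) sum_ord5.
have [-> _ _] := panstochastic_line_sum (j - 0 * i) A_pan.
have [_ -> _] := panstochastic_line_sum (j - 1 * i) A_pan.
have [_ _ ->] := panstochastic_line_sum (j - -1 * i) A_pan.
lra.
Qed.

Fact unit2_Z5 : (2 : 'I_5) \is a GRing.unit. Proof. by []. Qed.
Fact unit3_Z5 : (3 : 'I_5) \is a GRing.unit. Proof. by []. Qed.

Definition affine_perm5 (t : 'I_5 + 'I_5) : 'S_5 :=
  match t with
  | inl u => affine_perm u unit2_Z5
  | inr v => affine_perm v unit3_Z5
  end.

Lemma panstochastic_affine_perm5 t :
  panstochastic (perm_mx (affine_perm5 t) : 'M[R]_5).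
Proof. by case: t => u; apply: panstochastic_affine_perm. Qed.

Lemma panstochastic5_decomposition A : panstochastic A ->
  exists w : 'I_5 + 'I_5 -> R,
  [/\ forall t, 0 <= w t, \sum_t w t = 1
    & A = \sum_t w t *: perm_mx (affine_perm5 t)].
Proof.
move=> A_pan; have [[A_ge0 _] _] := A_pan.
have [u0 _ u0_min] := @arg_minP _ _ _ 0 xpredT (line_sum A 2) isT.
exists (fun t => match t with
         | inl u => (line_sum A 2 u - line_sum A 2 u0) / 5
         | inr v => (line_sum A 3 v - 1 + line_sum A 2 u0) / 5
         end); split.
- case=> [u|v]; apply: divr_ge0 => //.
    by rewrite subr_ge0; apply: u0_min.
  have := panstochastic5_entry (u0 - v) (2 * (u0 - v) + u0) A_pan.
  have -> : 2 * (u0 - v) + u0 - 2 * (u0 - v) = u0 by ring.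
  have -> : 2 * (u0 - v) + u0 - 3 * (u0 - v) = v by ring.
  have := A_ge0 (u0 - v) (2 * (u0 - v) + u0); lra.
- have sum2 := sum_line_sum A 2; have sum3 := sum_line_sum A 3.
  rewrite (doubly_stochastic_total A_pan.1) !sum_ord5 in sum2 sum3.
  rewrite big_sumType /= !sum_ord5; lra.
- apply/matrixP => i j; rewrite summxE big_sumType /=.
  under eq_bigr do rewrite mxE perm_mx_affineE.
  under [X in _ = _ + X]eq_bigr do rewrite mxE perm_mx_affineE.
  rewrite !sum_mulr_delta; have := panstochastic5_entry i j A_pan; lra.
Qed.

End Order5.

Theorem theorem1p1 (R : realType) (A : 'M[R]_5) :
  panstochastic A <-> convex_comb_pan_perm A.
Proof.
split.
- move=> A_pan; have [w [w_ge0 w_sum ->]] := panstochastic5_decomposition A_pan.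
  apply: convex_comb_pan_perm_family => //; exact: panstochastic_affine_perm5.
- move=> [c [c_ge0 [c_pan [c_sum ->]]]]; exact: panstochastic_convex.
Qed.
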